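(* Let $p\ge3$ be an integer. For each integer $k\ge1$ and each $1\le j\le k$, let $a_j=a_j(k)$ denote the smallest positive root of $g_j(\alpha)=j\alpha^{p-1}-(k-j+1)-(j-1)(1+\alpha)^{p-1}$. Then $\displaystyle\lim_{k\to\infty}\sum_{j=1}^k\frac1{a_j(k)}=\infty$. *)

From Stdlib Require Import Reals Lra Lia.
Open Scope R_scope.

Definition g (p k j : nat) (alpha : R) : R :=
  INR j * alpha ^ (p - 1) - INR (k - j + 1) - INR (j - 1) * (1 + alpha) ^ (p - 1).

Definition is_smallest_pos_root (f : R -> R) (a : R) : Prop :=
  0 < a /\ f a = 0 /\ (forall b, 0 < b -> f b = 0 -> a <= b).

Fixpoint sum_1_to (f : nat -> R) (k : nat) : R :=
  match k with
  | O => 0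
  | S k' => sum_1_to f k' + f (S k')
  end.

From Stdlib Require Import Reals Lra Lia.
Open Scope R_scope.

(* Write q = p - 1 >= 2.  The proof has two halves.

   If j^2 > k, the root a_j(k) is at most 2 q j.  Indeed
   g_j(0) = -k < 0, and at alpha = 2 q j the Bernoulli-type inequality
   (1 + x)^q (x - q) <= x^(q+1) gives (2j - 1)(1 + alpha)^q <= 2 j alpha^q,
   hence j alpha^q - (j-1)(1 + alpha)^q >= alpha^q / 2 >= alpha^2 / 2 > k;
   so g_j(2qj) > 0 and the intermediate value theorem puts a positive root,
   hence the smallest one, below 2qj.

   Keeping only the indices j > sqrt k, the sum is at least
   1/(2q) times the harmonic tail sum_{sqrt k < j <= k} 1/j, which is at
   least ln (k+1) - ln (sqrt k + 1) >= (ln (k+1) - ln 2) / 2 -> +oo. *)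

Lemma pow_shift_bound (n : nat) (x : R) :
  0 < x -> (1 + x) ^ n * (x - INR n) <= x ^ S n.
Proof.
  intro Hx. induction n as [|n IH].
  - simpl. lra.
  - rewrite S_INR.
    assert (HB : 0 <= (1 + x) ^ n) by (apply pow_le; lra).
    assert (HA : 0 <= x ^ S n) by (apply pow_le; lra).
    change ((1 + x) ^ S n) with ((1 + x) * (1 + x) ^ n).
    change (x ^ S (S n)) with (x * x ^ S n).
    destruct (Rle_dec (x - (INR n + 1)) 0) as [Hle | Hgt].
    + nra.
    + assert (Hstep : (1 + x) * (x - (INR n + 1)) <= x * (x - INR n))
        by (pose proof (pos_INR n); nra).
      nra.
Qed.

Lemma weighted_difference_ge_half (j A B : R) :
  1 <= j -> 0 <= A -> B * (2 * j - 1) <= 2 * j * A ->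
  A / 2 <= j * A - (j - 1) * B.
Proof.
  intros Hj HA HBA.
  assert (Hscaled : (2 * j - 1) * (j * A - (j - 1) * B - A / 2) >= A / 2) by nra.
  nra.
Qed.

Lemma g_continuous (p k j : nat) : continuity (g p k j).
Proof. unfold g. reg. Qed.

Lemma g_at_zero_neg (p k j : nat) :
  (2 <= p)%nat -> (1 <= j <= k)%nat -> g p k j 0 < 0.
Proof.
  intros Hp Hj. unfold g.
  rewrite pow_i by lia. rewrite Rplus_0_r, pow1.
  assert (1 <= INR (k - j + 1)) by (apply (le_INR 1); lia).
  pose proof (pos_INR (j - 1)). lra.
Qed.

Lemma g_pos_at_linear_point (p k j : nat) :
  (3 <= p)%nat -> (1 <= j <= k)%nat -> (k < j * j)%nat ->
  0 < g p k j (2 * INR (p - 1) * INR j).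
Proof.
  intros Hp Hj Hjk. unfold g.
  set (q := (p - 1)%nat).
  set (al := 2 * INR q * INR j).
  assert (Hq : 2 <= INR q) by (apply (le_INR 2); unfold q; lia).
  assert (HjR : 1 <= INR j) by (apply (le_INR 1); lia).
  assert (Hal : 4 <= al) by (unfold al; nra).
  assert (Hj1 : INR (j - 1) = INR j - 1) by (rewrite minus_INR by lia; simpl; lra).
  assert (Hk : INR (k - j + 1) < INR j * INR j).
  { rewrite <- mult_INR. apply lt_INR. lia. }
  assert (HA2 : al ^ 2 <= al ^ q) by (apply Rle_pow; [lra | unfold q; lia]).
  assert (Hbern : (1 + al) ^ q * (2 * INR j - 1) <= 2 * INR j * al ^ q).
  { pose proof (pow_shift_bound q al ltac:(lra)) as PB.
    rewrite <- tech_pow_Rmult in PB.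
    replace (al - INR q) with (INR q * (2 * INR j - 1)) in PB by (unfold al; ring).
    replace (al * al ^ q) with (INR q * (2 * INR j * al ^ q)) in PB by (unfold al; ring).
    apply Rmult_le_reg_l with (INR q); lra. }
  pose proof (weighted_difference_ge_half (INR j) (al ^ q) ((1 + al) ^ q)
                HjR ltac:(apply pow_le; lra) Hbern) as Hhalf.
  assert (Hal2 : 16 * (INR j * INR j) <= al ^ 2).
  { replace (al ^ 2) with (4 * (INR q * INR q) * (INR j * INR j)) by (unfold al; ring).
    assert (4 <= INR q * INR q) by nra. nra. }
  rewrite Hj1. nra.
Qed.

Lemma smallest_root_le_sign_change (f : R -> R) (a b : R) :
  continuity f -> f 0 < 0 -> 0 < b -> 0 < f b ->
  is_smallest_pos_root f a -> a <= b.
Proof.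
  intros Hf H0 Hb Hfb [_ [_ Hmin]].
  destruct (IVT f 0 b Hf ltac:(lra) H0 Hfb) as [z [Hz Hfz]].
  assert (z <> 0) by (intro; subst; lra).
  assert (a <= z) by (apply Hmin; [lra | exact Hfz]).
  lra.
Qed.

Lemma root_le_linear (p k j : nat) (a : R) :
  (3 <= p)%nat -> (1 <= j <= k)%nat -> (k < j * j)%nat ->
  is_smallest_pos_root (g p k j) a -> a <= 2 * INR (p - 1) * INR j.
Proof.
  intros Hp Hj Hjk Ha.
  apply (smallest_root_le_sign_change (g p k j)); auto.
  - apply g_continuous.
  - apply g_at_zero_neg; [lia | exact Hj].
  - assert (2 <= INR (p - 1)) by (apply (le_INR 2); lia).
    assert (1 <= INR j) by (apply (le_INR 1); lia). nra.
  - apply g_pos_at_linear_point; assumption.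
Qed.

Lemma sum_1_to_le (f h : nat -> R) (k : nat) :
  (forall j, (1 <= j <= k)%nat -> h j <= f j) -> sum_1_to h k <= sum_1_to f k.
Proof.
  induction k as [|k IH]; intro H; simpl.
  - lra.
  - assert (sum_1_to h k <= sum_1_to f k) by (apply IH; intros; apply H; lia).
    assert (h (S k) <= f (S k)) by (apply H; lia). lra.
Qed.

Lemma sum_1_to_scal (c : R) (f : nat -> R) (k : nat) :
  sum_1_to (fun j => c * f j) k = c * sum_1_to f k.
Proof. induction k as [|k IH]; simpl; [ring | rewrite IH; ring]. Qed.

Lemma sum_1_to_S (f : nat -> R) (k : nat) :
  sum_1_to f (S k) = sum_1_to f k + f (S k).
Proof. reflexivity. Qed.

Definition harmonic_tail (m k : nat) : R :=
  sum_1_to (fun j => if (m <=? j)%nat then / INR j else 0) k.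

Lemma harmonic_tail_nonneg (m k : nat) : 0 <= harmonic_tail m k.
Proof.
  unfold harmonic_tail. induction k as [|k IH]; [simpl; lra |].
  rewrite sum_1_to_S.
  assert (0 <= (if (m <=? S k)%nat then / INR (S k) else 0)).
  { destruct (m <=? S k)%nat; [left; apply Rinv_0_lt_compat, lt_0_INR; lia | lra]. }
  lra.
Qed.

Lemma ln_succ_sub_le_inv (x : R) : 0 < x -> ln (x + 1) - ln x <= / x.
Proof.
  intro Hx.
  assert (Hi : 0 < / x) by (apply Rinv_0_lt_compat; lra).
  replace (x + 1) with (x * (1 + / x)) by (field; lra).
  rewrite ln_mult by lra.
  assert (ln (1 + / x) < ln (exp (/ x))).
  { apply ln_increasing; [lra | apply exp_ineq1; lra]. }
  rewrite ln_exp in H. lra.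
Qed.

Lemma harmonic_tail_ge_ln (m k : nat) : (1 <= m <= k + 1)%nat ->
  ln (INR k + 1) - ln (INR m) <= harmonic_tail m k.
Proof.
  induction k as [|k IH]; intro Hm.
  - assert (m = 1%nat) by lia. subst. unfold harmonic_tail; simpl. rewrite Rplus_0_l, ln_1. lra.
  - unfold harmonic_tail. rewrite sum_1_to_S. fold (harmonic_tail m k).
    rewrite S_INR.
    destruct (Nat.eq_dec m (S k + 1)) as [E | E].
    + subst m. pose proof (harmonic_tail_nonneg (S k + 1) k).
      replace (S k + 1 <=? S k)%nat with false by (symmetry; apply Nat.leb_gt; lia).
      rewrite plus_INR, S_INR. simpl (INR 1). lra.
    + replace (m <=? S k)%nat with true by (symmetry; apply Nat.leb_le; lia).
      pose proof (IH ltac:(lia)).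
      pose proof (ln_succ_sub_le_inv (INR k + 1) ltac:(pose proof (pos_INR k); lra)).
      lra.
Qed.

(* Discarding the indices j <= sqrt k and bounding the others by the root
   bound turns the sum into a harmonic tail. *)
Lemma sum_inv_roots_ge_harmonic_tail (p : nat) (a : nat -> nat -> R) (k : nat) :
  (3 <= p)%nat -> (1 <= k)%nat ->
  (forall j, (1 <= j <= k)%nat -> is_smallest_pos_root (g p k j) (a k j)) ->
  / (2 * INR (p - 1)) * harmonic_tail (S (Nat.sqrt k)) k
    <= sum_1_to (fun j => / a k j) k.
Proof.
  intros Hp Hk ha.
  assert (Hq : 2 <= INR (p - 1)) by (apply (le_INR 2); lia).
  pose proof (Nat.sqrt_spec k) as Hs.
  unfold harmonic_tail. rewrite <- sum_1_to_scal.
  apply sum_1_to_le. intros j Hj.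
  destruct (ha j Hj) as [Ha Hr].
  destruct (S (Nat.sqrt k) <=? j)%nat eqn:E.
  - apply Nat.leb_le in E.
    assert (Hb := root_le_linear p k j (a k j) Hp Hj ltac:(nia) (conj Ha Hr)).
    assert (1 <= INR j) by (apply (le_INR 1); lia).
    replace (/ (2 * INR (p - 1)) * / INR j) with (/ (2 * INR (p - 1) * INR j))
      by (field; lra).
    apply Rinv_le_contravar; lra.
  - pose proof (Rinv_0_lt_compat _ Ha). lra.
Qed.

(* Since (sqrt k + 1)^2 <= 2 (k + 1), the tail keeps half of ln (k+1). *)
Lemma ln_sqrt_tail_ge (k : nat) :
  (ln (INR k + 1) - ln 2) / 2 <= ln (INR k + 1) - ln (INR (S (Nat.sqrt k))).
Proof.
  pose proof (Nat.sqrt_spec k) as Hs.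
  set (m := S (Nat.sqrt k)) in *.
  assert (Hk1 : 0 < INR k + 1) by (pose proof (pos_INR k); lra).
  assert (Hm : 0 < INR m) by (apply lt_0_INR; unfold m; lia).
  assert (Hsq : INR m * INR m <= 2 * (INR k + 1)).
  { rewrite <- mult_INR.
    replace (2 * (INR k + 1)) with (INR (2 * (k + 1)))
      by (rewrite mult_INR, plus_INR; simpl; ring).
    apply le_INR. unfold m. nia. }
  assert (Hln : ln (INR m * INR m) <= ln (2 * (INR k + 1))).
  { destruct (Rle_lt_or_eq_dec _ _ Hsq) as [Hlt | Heq].
    - left. apply ln_increasing; [nra | exact Hlt].
    - rewrite Heq. lra. }
  rewrite !ln_mult in Hln by lra. lra.
Qed.

Lemma sum_inv_roots_ge_ln (p : nat) (a : nat -> nat -> R) (k : nat) :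
  (3 <= p)%nat -> (1 <= k)%nat ->
  (forall j, (1 <= j <= k)%nat -> is_smallest_pos_root (g p k j) (a k j)) ->
  (ln (INR k + 1) - ln 2) / (4 * INR (p - 1)) <= sum_1_to (fun j => / a k j) k.
Proof.
  intros Hp Hk ha.
  assert (Hq : 2 <= INR (p - 1)) by (apply (le_INR 2); lia).
  pose proof (sum_inv_roots_ge_harmonic_tail p a k Hp Hk ha) as Hsum.
  pose proof (harmonic_tail_ge_ln (S (Nat.sqrt k)) k
                ltac:(pose proof (Nat.sqrt_le_lin k); lia)) as Htail.
  pose proof (ln_sqrt_tail_ge k) as Hhalf.
  assert (Hscale : (ln (INR k + 1) - ln 2) / (4 * INR (p - 1))
                   = / (2 * INR (p - 1)) * ((ln (INR k + 1) - ln 2) / 2))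
    by (field; lra).
  rewrite Hscale.
  apply Rle_trans with (2 := Hsum).
  apply Rmult_le_compat_l; [left; apply Rinv_0_lt_compat; lra | lra].
Qed.

Theorem mainTheorem9 (p : nat) (hp : (3 <= p)%nat) (a : nat -> nat -> R)
  (ha : forall k j : nat, (1 <= k)%nat -> (1 <= j <= k)%nat ->
          is_smallest_pos_root (g p k j) (a k j)) :
  cv_infty (fun k : nat => sum_1_to (fun j : nat => / a k j) k).
Proof.
  intro M.
  set (c := 4 * INR (p - 1)).
  assert (Hc : 0 < c) by (unfold c; assert (2 <= INR (p - 1)) by (apply (le_INR 2); lia); lra).
  destruct (INR_unbounded (exp (M * c + ln 2))) as [N HN].
  exists (S N). intros k Hk.
  assert (Hk1 : (1 <= k)%nat) by lia.
  pose proof (sum_inv_roots_ge_ln p a k hp Hk1 (fun j => ha k j Hk1)) as Hsum.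
  assert (Hlarge : M * c + ln 2 < ln (INR k + 1)).
  { rewrite <- (ln_exp (M * c + ln 2)).
    apply ln_increasing; [apply exp_pos |].
    assert (INR N <= INR k) by (apply le_INR; lia). lra. }
  assert (Hbound : M < (ln (INR k + 1) - ln 2) / c).
  { apply (Rmult_lt_reg_r c); [exact Hc |].
    unfold Rdiv. rewrite Rmult_assoc, Rinv_l, Rmult_1_r by lra. lra. }
  fold c in Hsum. lra.
Qed.
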